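(* For all integers $n,k_1,k_2\geq 2$, one has $\mathsf{Cube}_{n,k_1}\Rightarrow_{\mathsf{lex}}\mathsf{Cube}_{n,k_2}$ and $\mathsf{Cube}_{n,k_2}\Rightarrow_{\mathsf{lex}}\mathsf{Cube}_{n,k_1}$; i.e., a finitely complete category has $\mathsf{Cube}_{n,k_1}$-closed relations if and only if it has $\mathsf{Cube}_{n,k_2}$-closed relations.
   Context: A simple extended matrix $M$ (with parameters $n\geq 1$, $m\geq 0$, $k\geq 1$) is an $n\times(m+1)$ array $\left[ x_{ij} \mid y_i\right]$ whose entries $x_{ij}$ ($1\le i\le n$, $1\le j\le m$) and $y_i$ are (not necessarily distinct) variables from $\{x_1,\dots,x_k\}$; the first $m$ columns are the left columns and the last column is the right column. In a finitely complete category $\mathbb{C}$, an internal $n$-ary relation $r\colon R\rightarrowtail A^n$ (a monomorphism) is $M$-closed if for every object $B$ and every function $f\colon\{x_1,\dots,x_k\}\to\mathbb{C}(B,A)$ such that, for each $j\in\{1,\dots,m\}$, the morphism $(f(x_{1j}),\dots,f(x_{nj}))\colon B\to A^n$ factors through $r$, the morphism $(f(y_1),\dots,f(y_n))\colon B\to A^n$ also factors through $r$. $\mathbb{C}$ has $M$-closed relations if every internal $n$-ary relation is $M$-closed. $M_1\Rightarrow_{\mathsf{lex}}M_2$ means every finitely complete category with $M_1$-closed relations has $M_2$-closed relations. For integers $n,k\geq 2$, $\mathsf{Cube}_{n,k}$ is the simple extended matrix with $n$ rows and variables $\{x_1,\dots,x_k\}$ whose $k^n-1$ left columns are all the $n$-tuples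 of elements of $\{x_1,\dots,x_k\}$ except $(x_1,\dots,x_1)$, and whose right column is $(x_1,\dots,x_1)$. *)

From mathcomp Require Import all_boot.
Set Implicit Arguments. Unset Strict Implicit. Unset Printing Implicit Defensive.

Record Category := {
  Obj :> Type;
  Hom : Obj -> Obj -> Type;
  idm : forall X, Hom X X;
  comp : forall X Y Z, Hom Y Z -> Hom X Y -> Hom X Z;
  comp_assoc : forall X Y Z W (h : Hom Z W) (g : Hom Y Z) (f : Hom X Y),
      comp h (comp g f) = comp (comp h g) f;
  comp_id_l : forall X Y (f : Hom X Y), comp (idm Y) f = f;
  comp_id_r : forall X Y (f : Hom X Y), comp f (idm X) = f
}.
Arguments Hom {c} X Y.
Arguments idm {c} X.
Arguments comp {c X Y Z} g f.

Definition mono (C : Category) (X Y : C) (m : Hom X Y) : Prop :=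
  forall Z (g h : Hom Z X), comp m g = comp m h -> g = h.

Definition is_product (C : Category) (n : nat) (A : 'I_n -> C)
    (P : C) (p : forall i, Hom P (A i)) : Prop :=
  forall (B : C) (f : forall i, Hom B (A i)),
    exists g : Hom B P, (forall i, comp (p i) g = f i) /\
      (forall g' : Hom B P, (forall i, comp (p i) g' = f i) -> g' = g).

Definition is_equalizer (C : Category) (X Y : C) (f g : Hom X Y)
    (E : C) (e : Hom E X) : Prop :=
  comp f e = comp g e /\
  forall (B : C) (h : Hom B X), comp f h = comp g h ->
    exists u : Hom B E, comp e u = h /\
      (forall u' : Hom B E, comp e u' = h -> u' = u).

Definition finitely_complete (C : Category) : Prop :=
  (forall (n : nat) (A : 'I_n -> C), exists (P : C) (p : forall i, Hom P (A i)),
      @is_product C n A P p) /\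
  (forall (X Y : C) (f g : Hom X Y), exists (E : C) (e : Hom E X),
      @is_equalizer C X Y f g E e).

(* A simple extended matrix with n rows over the variables x_1..x_k, encoded
   as 'I_k (x_1 = the ordinal 0).  The left columns are indexed by a finite
   type [col] (of cardinality m). *)
Record ext_matrix (n k : nat) := ExtMatrix {
  col : finType;
  left_entry : 'I_n -> col -> 'I_k;
  right_entry : 'I_n -> 'I_k
}.

(* For an internal relation r : R >-> A^n, where A^n is given by a product
   cone (P, p) of the constant family A, the morphism (g_1,...,g_n) : B -> A^n
   factors through r. *)
Definition factors_through (C : Category) (n : nat) (A P R : C)
    (p : 'I_n -> Hom P A) (r : Hom R P) (B : C) (g : 'I_n -> Hom B A) : Prop :=
  exists h : Hom B R, forall i, comp (p i) (comp r h) = g i.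

Definition M_closed (C : Category) (n k : nat) (M : ext_matrix n k)
    (A P R : C) (p : 'I_n -> Hom P A) (r : Hom R P) : Prop :=
  forall (B : C) (f : 'I_k -> Hom B A),
    (forall j : col M, @factors_through C n A P R p r B (fun i => f (@left_entry n k M i j))) ->
    @factors_through C n A P R p r B (fun i => f (@right_entry n k M i)).

Definition has_M_closed_relations (C : Category) (n k : nat) (M : ext_matrix n k)
    : Prop :=
  forall (A P : C) (p : 'I_n -> Hom P A), @is_product C n (fun _ => A) P p ->
  forall (R : C) (r : Hom R P), mono r -> @M_closed C n k M A P R p r.

Definition lex_implies (n k1 k2 : nat) (M1 : ext_matrix n k1) (M2 : ext_matrix n k2)
    : Prop :=
  forall C : Category, finitely_complete C ->
    @has_M_closed_relations C n k1 M1 -> @has_M_closed_relations C n k2 M2.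

(* Cube_{n,k}: left columns = all n-tuples of variables except (x_1,...,x_1);
   right column = (x_1,...,x_1). *)
Definition cube_cols (n k : nat) : finType :=
  {f : {ffun 'I_n -> 'I_k} | ~~ [forall i, val (f i) == 0]}.

Definition Cube (n k : nat) (hk : 0 < k) : ext_matrix n k :=
  @ExtMatrix n k (cube_cols n k)
    (fun i (c : cube_cols n k) => (val c) i)
    (fun _ => Ordinal hk).

(* Closedness under a simple extended matrix is preserved by renaming its
   variables: if a renaming [s] of the variables of [M1] sends every left column
   of [M1] to a left column of [M2] and the right column to the right column, then
   [M2]-closedness follows from [M1]-closedness by instantiating [M1] at [f \o s].
   For cubes, collapsing x_1 to x_1 and every other variable to x_2 is such a
   renaming from [Cube n a] to [Cube n b] whenever b >= 2, since a tuple that is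
   not constantly x_1 stays so. *)

From mathcomp Require Import all_boot.

Lemma eq_factors_through (C : Category) (n : nat) (A P R : C)
    (p : 'I_n -> Hom P A) (r : Hom R P) (B : C) (g g' : 'I_n -> Hom B A) :
  g =1 g' -> factors_through p r g -> factors_through p r g'.
Proof. by move=> eq_g [h Hh]; exists h => i; rewrite Hh eq_g. Qed.

Section Renaming.
Variables (n k1 k2 : nat) (M1 : ext_matrix n k1) (M2 : ext_matrix n k2).
Variable s : 'I_k1 -> 'I_k2.
Hypothesis renaming_left : forall j1 : col M1, exists j2 : col M2,
  forall i, s (left_entry i j1) = left_entry i j2.
Hypothesis renaming_right : forall i, s (right_entry M1 i) = right_entry M2 i.

Lemma M_closed_renaming (C : Category) (A P R : C) (p : 'I_n -> Hom P A)
    (r : Hom R P) :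
  M_closed M1 p r -> M_closed M2 p r.
Proof.
move=> closed1 B f left2.
apply: eq_factors_through (closed1 B (f \o s) _) => [i | j1] /=.
  by rewrite renaming_right.
have [j2 s_j1] := renaming_left j1.
by apply: eq_factors_through (left2 j2) => i /=; rewrite s_j1.
Qed.

Lemma lex_implies_renaming : lex_implies M1 M2.
Proof.
move=> C _ closed1 A P p prod_p R r mono_r.
exact: M_closed_renaming (closed1 A P p prod_p R r mono_r).
Qed.

End Renaming.

Section CubeCollapse.
Variables (n a b : nat) (ha : 0 < a) (hb : 1 < b).

Definition collapse_var (x : 'I_a) : 'I_b :=
  if val x == 0 then Ordinal (ltnW hb) else Ordinal hb.

Lemma collapse_var_eq0 (x : 'I_a) : (val (collapse_var x) == 0) = (val x == 0).
Proof. by rewrite /collapse_var; case: (val x == 0). Qed.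

Lemma collapse_cube_col (c : cube_cols n a) :
  ~~ [forall i, val ([ffun i => collapse_var (val c i)] i) == 0].
Proof.
case: c => f /= not_const; apply: contra not_const => /forallP const.
by apply/forallP => i; move: (const i); rewrite ffunE collapse_var_eq0.
Qed.

Definition collapse_col (c : cube_cols n a) : cube_cols n b :=
  exist _ [ffun i => collapse_var (val c i)] (collapse_cube_col c).

Lemma lex_implies_Cube : lex_implies (Cube n ha) (Cube n (ltnW hb)).
Proof.
apply: (@lex_implies_renaming _ _ _ _ _ collapse_var) => [c | i] //=.
by exists (collapse_col c) => i /=; rewrite ffunE.
Qed.

End CubeCollapse.

Theorem corollary2p2 (n k1 k2 : nat) (hn : 2 <= n) (hk1 : 2 <= k1) (hk2 : 2 <= k2) :
  lex_implies (Cube n (ltnW hk1)) (Cube n (ltnW hk2)) /\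
  lex_implies (Cube n (ltnW hk2)) (Cube n (ltnW hk1)).
Proof. by split; apply: lex_implies_Cube. Qed.
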